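(* Let $n\ge8$ be an integer. For every integer $k$ with $2\le k\le\lfloor n/2\rfloor-1$, the coefficient of the monomial $T_nT_{n+1-k}T_{k+1}$ in $R_{n+1}$ is $$c^{(n+1)}_{n,n+1-k,k+1}=-2(n+1)\binom{n}{k}.$$
   Context: Let $T_1,T_2,\dots$ be indeterminates, $T_\alpha=T_{\alpha_1}\cdots T_{\alpha_d}$. Define linear operators $L,H$ on monomials (constants sent to $0$): $L(T_{\alpha_1}\cdots T_{\alpha_r})=\sum_{1\le i<j\le r}T_{\alpha_1}\cdots T_{\alpha_i+1}\cdots T_{\alpha_j+1}\cdots T_{\alpha_r}$, $H(T_{\alpha_1}\cdots T_{\alpha_r})=-\frac12\sum_{k=1}^{r}\sum_{l=1}^{\alpha_k-1}\binom{\alpha_k}{l}T_{1+l}T_{1+\alpha_k-l}\prod_{i\ne k}T_{\alpha_i}$. For $n\ge2$ let $A_n=-\sum_{k=1}^{n-1}\binom{n}{k}T_{1+k}T_{1+n-k}T_n$; set $R_2=0$, $R_{n+1}=A_n+L(R_n)+H(R_n)$. $c^{(n)}_\alpha$ is the coefficient of the monomial $T_\alpha$ in $R_n$. *)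

(* Polynomials in the indeterminates T_1, T_2, ... with
   rational coefficients are represented as formal sums: a list of terms
   (c, alpha), where alpha : seq nat is the list of indices of the monomial
   T_alpha = T_{alpha_1} ... T_{alpha_r} (order irrelevant). *)
From HB Require Import structures.
From mathcomp Require Import all_boot all_order all_algebra.
Set Implicit Arguments.
Unset Strict Implicit.
Unset Printing Implicit Defensive.
Import Order.TTheory GRing.Theory Num.Theory.
Local Open Scope ring_scope.

Definition term := (rat * seq nat)%type.
Definition fpoly := seq term.

Definition coefT (p : fpoly) (alpha : seq nat) : rat :=
  \sum_(t <- p | perm_eq t.2 alpha) t.1.

Definition incr2 (i j : nat) (s : seq nat) : seq nat :=
  set_nth 0%N (set_nth 0%N s i (nth 0%N s i).+1) j (nth 0%N s j).+1.

Definition rem_at (k : nat) (s : seq nat) : seq nat := take k s ++ drop k.+1 s.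

Definition L_term (t : term) : fpoly :=
  let s := t.2 in
  flatten [seq [seq (t.1, incr2 i j s) | j <- iota i.+1 (size s - i.+1)]
          | i <- iota 0 (size s)].

Definition H_term (t : term) : fpoly :=
  let s := t.2 in
  flatten [seq (let a := nth 0%N s k in
                [seq (- (1 / 2) * t.1 * ('C(a, l))%:R,
                      (1 + l)%N :: (1 + a - l)%N :: rem_at k s)
                | l <- iota 1 (a - 1)])
          | k <- iota 0 (size s)].

Definition Lop (p : fpoly) : fpoly := flatten (map L_term p).
Definition Hop (p : fpoly) : fpoly := flatten (map H_term p).

Definition Apoly (n : nat) : fpoly :=
  [seq (- ('C(n, k))%:R, [:: (1 + k)%N; (1 + n - k)%N; n]) | k <- iota 1 (n - 1)].

(* R_2 = 0, R_{n+1} = A_n + L(R_n) + H(R_n) for n >= 2 (R_0, R_1 := 0, unused) *)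
Fixpoint Rpoly (n : nat) : fpoly :=
  if n is m.+1 then
    (if (m < 2)%N then [::] else Apoly m ++ Lop (Rpoly m) ++ Hop (Rpoly m))
  else [::].

(** Only cubic monomials matter: [H] raises the degree, and every cubic monomial
    of [R_m] has all its indices below [m].  Weighting a term by the number of
    orderings of [(M, b, c)] that equal its index list (instead of testing
    equality up to permutation) makes [L] act exactly by index shifts: the
    weighted coefficient of [T_M T_b T_c] in [L(R_M)] is the sum of those of
    [T_(M-1) T_(b-1) T_c], [T_(M-1) T_b T_(c-1)] and [T_M T_(b-1) T_(c-1)] in
    [R_M], the last one vanishing because [M] is too large.  Adding the
    contribution of [A_M], which is [-2 C(M, b-1)] unless [b] or [c] equals
    [M], induction on [M] shows that for [b + c = M + 2] and [b, c >= 2] the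
    weighted coefficient of [T_M T_b T_c] in [R_(M+1)] is [-2 (M+1) C(M, b-1)].  When [M], [b], [c] are distinct the
    weight is the plain coefficient. *)
From mathcomp Require Import all_boot all_order all_algebra.
From mathcomp Require Import zify ring.
Import GRing.Theory.
Local Open Scope ring_scope.
Set Implicit Arguments.
Unset Strict Implicit.

Definition wcoef (w : seq nat -> nat) (p : fpoly) : rat :=
  \sum_(t <- p) t.1 * (w t.2)%:R.

Definition nperm3 (a b c : nat) (s : seq nat) : nat :=
  ((s == [:: a; b; c]) + (s == [:: a; c; b]) + (s == [:: b; a; c]) +
   (s == [:: b; c; a]) + (s == [:: c; a; b]) + (s == [:: c; b; a]))%N.

Lemma wcoef_cat w p q : wcoef w (p ++ q) = wcoef w p + wcoef w q.
Proof. by rewrite /wcoef big_cat. Qed.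

Lemma wcoef_flatten_map w (f : term -> fpoly) p :
  wcoef w (flatten (map f p)) = \sum_(t <- p) wcoef w (f t).
Proof.
elim: p => [|t p IH]; first by rewrite /wcoef !big_nil.
by rewrite /= wcoef_cat big_cons IH.
Qed.

Lemma nperm3_size a b c s : size s != 3%N -> nperm3 a b c s = 0%N.
Proof.
move=> hs; have F (x y z : nat) : (s == [:: x; y; z]) = false.
  by apply/eqP => E; move: hs; rewrite E.
by rewrite /nperm3 !F.
Qed.

Lemma nperm3_bound a b c m s :
  all (fun x => x < m)%N s -> m \in [:: a; b; c] -> nperm3 a b c s = 0%N.
Proof.
move=> hs hm; have F (x y z : nat) : m \in [:: x; y; z] -> (s == [:: x; y; z]) = false.
  move=> hxyz; apply/eqP => E; move: hs; rewrite E /=.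
  by move: hxyz; rewrite !inE => /or3P[] /eqP <-; rewrite ltnn ?andbF.
rewrite /nperm3 !F //; move: hm; rewrite !inE.
all: by case/or3P=> ->; rewrite ?orbT.
Qed.

Lemma perm_eq3_nperm3 (a b c : nat) s : a != b -> a != c -> b != c ->
  nat_of_bool (perm_eq s [:: a; b; c]) = nperm3 a b c s.
Proof.
move=> /negbTE hab /negbTE hac /negbTE hbc.
have hba : (b == a) = false by rewrite eq_sym.
have hca : (c == a) = false by rewrite eq_sym.
have hcb : (c == b) = false by rewrite eq_sym.
case H: (perm_eq s [:: a; b; c]).
- case: s H => [|x [|y [|z [|w s]]]] H; try by move/perm_size: H.
  have hx : x \in [:: a; b; c] by rewrite -(perm_mem H) !inE eqxx.
  have hy : y \in [:: a; b; c] by rewrite -(perm_mem H) !inE eqxx ?orbT.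
  have hz : z \in [:: a; b; c] by rewrite -(perm_mem H) !inE eqxx ?orbT.
  move: hx hy hz H; rewrite !inE => /or3P[]/eqP-> /or3P[]/eqP-> /or3P[]/eqP->;
  by rewrite /nperm3 /perm_eq /= ?eqseq_cons !eqxx ?hab ?hac ?hbc ?hba ?hca ?hcb.
- have F (u : seq nat) : perm_eq u [:: a; b; c] -> (s == u) = false.
    by move=> hu; apply/eqP => E; move: H; rewrite E hu.
  by rewrite /nperm3 !F // /perm_eq /= !eqxx ?hab ?hac ?hbc ?hba ?hca ?hcb.
Qed.

Lemma coefT_nperm3 p (a b c : nat) : a != b -> a != c -> b != c ->
  coefT p [:: a; b; c] = wcoef (nperm3 a b c) p.
Proof.
move=> hab hac hbc; rewrite /coefT /wcoef big_mkcond /=; apply: eq_bigr => t _.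
by rewrite -perm_eq3_nperm3 //; case: (perm_eq t.2 _); rewrite ?mulr1 ?mulr0.
Qed.

Lemma nperm3_incr2 a b c x y z : (0 < a)%N -> (0 < b)%N -> (0 < c)%N ->
  (nperm3 a b c [:: x.+1; y.+1; z] + nperm3 a b c [:: x.+1; y; z.+1]
     + nperm3 a b c [:: x; y.+1; z.+1]
   = nperm3 a.-1 b.-1 c [:: x; y; z] + nperm3 a.-1 b c.-1 [:: x; y; z]
     + nperm3 a b.-1 c.-1 [:: x; y; z])%N.
Proof.
have eqS_pred (u v : nat) : (0 < v)%N -> (u.+1 == v) = (u == v.-1) by case: v.
move=> ha hb hc; rewrite /nperm3 !eqseq_cons !andbT.
by rewrite !(eqS_pred _ _ ha) !(eqS_pred _ _ hb) !(eqS_pred _ _ hc); ring.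
Qed.

Lemma nperm3_Apoly_term M b c k :
  (b + c = M + 2)%N -> (2 <= b)%N -> (2 <= c)%N -> (1 <= k <= M - 1)%N ->
  nperm3 M b c [:: (1 + k)%N; (1 + M - k)%N; M] =
  ((k == b.-1) + (k == c.-1) + ((c == M) && (k == M.-1)) + ((b == M) && (k == M.-1))
   + ((c == M) && (k == 1%N)) + ((b == M) && (k == 1%N)))%N.
Proof.
move=> hbc hb hc /andP [hk1 hk2]; rewrite /nperm3 !eqseq_cons !eqxx !andbT.
have -> : [&& (1 + k == M)%N, (1 + M - k == b)%N & (M == c)] = (c == M) && (k == M.-1).
  by apply/idP/idP; lia.
have -> : [&& (1 + k == M)%N, (1 + M - k == c)%N & (M == b)] = (b == M) && (k == M.-1).
  by apply/idP/idP; lia.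
have -> : [&& (1 + k == b)%N, (1 + M - k == M)%N & (M == c)] = (c == M) && (k == 1%N).
  by apply/idP/idP; lia.
have -> : [&& (1 + k == c)%N, (1 + M - k == M)%N & (M == b)] = (b == M) && (k == 1%N).
  by apply/idP/idP; lia.
have -> : ((1 + k == b)%N && (1 + M - k == c)%N) = (k == b.-1) by apply/idP/idP; lia.
have -> : ((1 + k == c)%N && (1 + M - k == b)%N) = (k == c.-1) by apply/idP/idP; lia.
ring.
Qed.

Lemma size_incr2 i j s :
  (i < size s)%N -> (j < size s)%N -> size (incr2 i j s) = size s.
Proof. by move=> hi hj; rewrite /incr2 !size_set_nth; lia. Qed.

Lemma L_termP t u : u \in L_term t -> u.1 = t.1 /\ size u.2 = size t.2.
Proof.
rewrite /L_term => /flattenP [v /mapP [i]].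
rewrite mem_iota => /andP [_ hi] -> /mapP [j]; rewrite mem_iota => /andP [hj1 hj2] ->.
by split; rewrite //= size_incr2 //; lia.
Qed.

Lemma size_H_term t u : u \in H_term t -> size u.2 = (size t.2).+1.
Proof.
rewrite /H_term => /flattenP [v /mapP [k]].
rewrite mem_iota => /andP [_ hk] -> /mapP [l _] ->.
by rewrite /= /rem_at size_cat size_take size_drop hk; lia.
Qed.

Definition Rshape (m : nat) (p : fpoly) :=
  forall t, t \in p ->
    (3 <= size t.2)%N /\ (size t.2 = 3%N -> all (fun x => x < m)%N t.2).

Lemma RpolyS m : (2 <= m)%N -> Rpoly m.+1 = Apoly m ++ Lop (Rpoly m) ++ Hop (Rpoly m).
Proof. by move=> hm /=; rewrite ifF //; apply/negbTE; rewrite -leqNgt. Qed.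

Lemma Rpoly_shape m : Rshape m (Rpoly m).
Proof.
elim: m => [|m IH] //=; case: ifP => // hm t; rewrite !mem_cat => /or3P [].
- rewrite /Apoly => /mapP [k]; rewrite mem_iota => /andP [h1 h2] -> /=.
  by split=> // _; apply/and4P; split=> //; lia.
- rewrite /Lop => /flattenP [v /mapP [t0 t0in ->] tin].
  have [s0 s3] := IH t0 t0in; have [_ ->] := L_termP tin.
  split=> // e3; move: (s3 e3) tin.
  case: t0 {t0in s0 s3} e3 => c0 [|x [|y [|z [|w s]]]] //= _ /and4P [hx hy hz _].
  by rewrite !inE => /or3P [] /eqP -> /=; apply/and4P; split=> //; lia.
- rewrite /Hop => /flattenP [v /mapP [t0 t0in ->] tin].
  have [s0 _] := IH t0 t0in; rewrite (size_H_term tin).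
  by split=> [|e]; [exact: leqW | move: s0; rewrite -ltnS e].
Qed.

Section CubicCoefficients.

Variables (m : nat) (p : fpoly).
Hypothesis shape_p : Rshape m p.

Lemma wcoef_bound a b c : m \in [:: a; b; c] -> wcoef (nperm3 a b c) p = 0.
Proof.
move=> hm; rewrite /wcoef big1_seq // => t /andP [_ /shape_p [_ h3]].
case: (eqVneq (size t.2) 3) => e.
- by rewrite (nperm3_bound (h3 e) hm) mulr0.
- by rewrite nperm3_size ?mulr0.
Qed.

Lemma wcoef_Hop a b c : wcoef (nperm3 a b c) (Hop p) = 0.
Proof.
rewrite /Hop wcoef_flatten_map big1_seq // => t /andP [_ /shape_p [h3 _]].
rewrite /wcoef big1_seq // => u /andP [_ /size_H_term hu].
by rewrite nperm3_size ?mulr0 // hu; apply/eqP => e; move: h3; rewrite -ltnS e.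
Qed.

Lemma wcoef_Lop a b c : (0 < a)%N -> (0 < b)%N -> (0 < c)%N ->
  wcoef (nperm3 a b c) (Lop p) =
  wcoef (nperm3 a.-1 b.-1 c) p + wcoef (nperm3 a.-1 b c.-1) p
  + wcoef (nperm3 a b.-1 c.-1) p.
Proof.
move=> ha hb hc; rewrite /Lop wcoef_flatten_map /wcoef -!big_split /=.
apply: eq_big_seq => -[c0 s] /shape_p /= [h3 _].
case: (ltngtP (size s) 3) => hs; first by have := leq_ltn_trans h3 hs; rewrite ltnn.
- rewrite !nperm3_size ?gtn_eqF // !mulr0 !addr0 big1_seq // => u /andP [_].
  by move=> /L_termP [_ hu]; rewrite nperm3_size ?mulr0 // hu gtn_eqF.
- case: s hs {h3} => [|x [|y [|z [|w s]]]] // _.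
  rewrite /L_term /= !big_cons big_nil /= -!mulrDr -!natrD -nperm3_incr2 //.
  by rewrite !natrD; ring.
Qed.

End CubicCoefficients.

Lemma sum_indicator (F : nat -> rat) r i : uniq r -> i \in r ->
  \sum_(k <- r) F k * (k == i)%:R = F i.
Proof.
move=> ur ir; rewrite (bigD1_seq i) //= eqxx mulr1 big1 ?addr0 //.
by move=> k /negbTE ->; rewrite mulr0.
Qed.

Lemma sum_indicatorP (F : nat -> rat) r (P : bool) i : uniq r -> (P -> i \in r) ->
  \sum_(k <- r) F k * (P && (k == i))%:R = P%:R * F i.
Proof.
case: P => /= ur ir; first by rewrite sum_indicator ?mul1r //; apply: ir.
by rewrite mul0r big1 // => k _; rewrite mulr0.
Qed.

Lemma wcoef_Apoly M b c : (2 <= M)%N -> (b + c = M + 2)%N -> (2 <= b)%N -> (2 <= c)%N ->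
  wcoef (nperm3 M b c) (Apoly M) =
  - (2 * ('C(M, b.-1))%:R + 2 * M%:R * ((b == M) + (c == M))%:R).
Proof.
move=> hM hbc hb hc; rewrite /wcoef /Apoly big_map /=.
pose G k : rat := - ('C(M, k))%:R * (k == b.-1)%:R + - ('C(M, k))%:R * (k == c.-1)%:R
   + - ('C(M, k))%:R * ((c == M) && (k == M.-1))%:R
   + - ('C(M, k))%:R * ((b == M) && (k == M.-1))%:R
   + - ('C(M, k))%:R * ((c == M) && (k == 1%N))%:R
   + - ('C(M, k))%:R * ((b == M) && (k == 1%N))%:R.
rewrite (eq_big_seq G); last first.
  move=> k; rewrite mem_iota => hk.
  by rewrite nperm3_Apoly_term /G ?natrD ?mulrDr //; lia.
have I i : (1 <= i <= M - 1)%N -> i \in iota 1 (M - 1) by rewrite mem_iota; lia.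
rewrite /G !big_split /= !sum_indicator ?I ?iota_uniq //; try lia.
rewrite !sum_indicatorP ?iota_uniq //; try by move=> _; apply: I; lia.
have -> : 'C(M, c.-1) = 'C(M, b.-1) by rewrite -bin_sub; [congr 'C(_, _)|]; lia.
have -> : 'C(M, M.-1) = M by rewrite -subn1 bin_sub ?bin1 //; lia.
by rewrite bin1 !natrD; ring.
Qed.

Lemma wcoef_Rpoly_step m b c : (1 <= m)%N -> (b + c = m + 3)%N -> (2 <= b)%N -> (2 <= c)%N ->
  wcoef (nperm3 m.+1 b c) (Rpoly m.+2) =
  wcoef (nperm3 m b.-1 c) (Rpoly m.+1) + wcoef (nperm3 m b c.-1) (Rpoly m.+1)
  - (2 * ('C(m.+1, b.-1))%:R + 2 * m.+1%:R * ((b == m.+1) + (c == m.+1))%:R).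
Proof.
move=> hm hbc hb hc; have shape := @Rpoly_shape m.+1.
rewrite RpolyS // !wcoef_cat (wcoef_Hop shape) addr0 (wcoef_Lop shape) //; try lia.
rewrite (wcoef_bound shape (a := m.+1)) ?inE ?eqxx // addr0 wcoef_Apoly //; try lia.
by rewrite addrC.
Qed.

Lemma wcoef_Rpoly_cubic m b c : (2 <= m)%N -> (b + c = m + 2)%N -> (2 <= b)%N -> (2 <= c)%N ->
  wcoef (nperm3 m b c) (Rpoly m.+1) = - (2 * m.+1%:R * ('C(m, b.-1))%:R).
Proof.
elim: m b c => [//|m IH] b c hm hbc hb hc.
rewrite wcoef_Rpoly_step //; try lia.
have [m1 | m2] := eqVneq m 1%N.
  have [-> ->] : b = 2%N /\ c = 2%N by lia.
  by rewrite m1 /wcoef /= !big_nil bin1; ring.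
have shape := @Rpoly_shape m.+1.
have [b2 | b3] := eqVneq b 2%N.
  have -> : c = m.+1 by lia.
  rewrite b2 (wcoef_bound shape (b := 1%N)) ?inE ?eqxx ?orbT // IH //; try lia.
  rewrite (_ : (2 == m.+1) = false); last by apply/eqP; lia.
  by rewrite /= !bin1 -!natr1; ring.
have [c2 | c3] := eqVneq c 2%N.
  have -> : b = m.+1 by lia.
  rewrite c2 (wcoef_bound shape (b := m.+1)) ?inE ?eqxx ?orbT // IH //; try lia.
  rewrite (_ : (2 == m.+1) = false); last by apply/eqP; lia.
  have -> : 'C(m, m.-1) = m by rewrite -subn1 bin_sub ?bin1 //; lia.
  by rewrite /= binSn -!natr1; ring.
rewrite !IH //; try lia.
rewrite (_ : (b == m.+1) = false); last by apply/eqP; lia.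
rewrite (_ : (c == m.+1) = false); last by apply/eqP; lia.
case: b hb hbc b3 => [|[|b]] //= _ _ _.
by rewrite binS natrD -!natr1; ring.
Qed.

Theorem mainTheorem15 (n k : nat) :
  (8 <= n)%N -> (2 <= k)%N -> (k <= n %/ 2 - 1)%N ->
  coefT (Rpoly n.+1) [:: n; (n + 1 - k)%N; k.+1] =
  - (2 * (n + 1)%:R * ('C(n, k))%:R : rat).
Proof.
move=> h8 hk2 hk.
rewrite coefT_nperm3; [| by apply/eqP; lia ..].
rewrite wcoef_Rpoly_cubic; try lia.
by rewrite (_ : (n + 1 - k).-1 = n - k)%N ?bin_sub ?addn1 //; lia.
Qed.
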